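(* Every generalized contingent solution for (MOC) is a generalized proximal solution for (MOC).
   Context: Setting (MOC). Fix $T>0$, $I=[0,T]$, integers $n,m,p\ge1$, nonempty compact $U\subset\mathbb{R}^m$; $f:\mathbb{R}^n\times U\to\mathbb{R}^n$ continuous, bounded, and Lipschitz in $x$ uniformly in $u$; $L:\mathbb{R}^n\times U\to\mathbb{R}^p$ continuous, bounded, and Lipschitz in $x$ uniformly in $u$. Euclidean norms/inner products on $\mathbb{R}^p$ and $\mathbb{R}^{1+n+p}$. $P\subset\mathbb{R}^p$: closed convex pointed cone containing $0$ with nonempty interior. For $W:I\times\mathbb{R}^n\rightrightarrows\mathbb{R}^p$, $W_\uparrow(t,x)=W(t,x)+P$. $W$ is an extremal element map if for all $(t,x)$ and $y\in W(t,x)$: $W(t,x)\cap(y-P)=\{y\}$ and $W(t,x)\cap(y+P)=\{y\}$. $(\mathrm{FL})(x)=\mathrm{cl}\,\mathrm{co}\{(f(x,u),L(x,u)):u\in U\}$. Contingent cone: $T_S(z)=\{v:\exists h_k\to0^+,\exists v_k\to v,z+h_kv_k\in S\}$; contingent derivative $DF(z,y)$ has graph $T_{\mathrm{gph}F}(z,y)$, value at $v$ written $DF((z,y);v)$. Proximal normal cone: $N_S(z)=\{v:\exists M>0,\langle v,\bar z-z\rangle\le M\|\bar z-z\|^2\ \forall\bar z\in S\}$; coderivative $D^*F(z,y)(w^* )=\{v^*:(v^*,-w^* )\in N_{\mathrm{gph}F}(z,y)\}$. Generalized contingent solution: an extremal element map $W$ with (i) for all $(t,x)\in[0,T)\times\mathbb{R}^n$,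 $y\in W(t,x)$, some $(\bar f,\bar L)\in(\mathrm{FL})(x)$ satisfies $-\bar L\in DW_\uparrow((t,x,y);(1,\bar f))$; (ii) for all $(t,x)\in(0,T]\times\mathbb{R}^n$, $y\in W(t,x)$, $(f,L)\in(\mathrm{FL})(x)$: $L\in DW_\uparrow((t,x,y);(-1,-f))$; (iii) $W(T,x)=\{0\}$ for all $x$. Generalized proximal solution: an extremal element map $W$ with (i) for all $(t,x)\in(0,T)\times\mathbb{R}^n$, $y\in W(t,x)$, $w^*\in\mathbb{R}^p$, $(\xi^*,v^* )\in D^*W_\uparrow(t,x,y)(w^* )$: $\xi^*+\inf_{(f,L)\in(\mathrm{FL})(x)}(\langle v^*,f\rangle+\langle w^*,L\rangle)=0$; (ii) for all $x$: $W_\uparrow(0,x)\subset\limsup_{t\to0^+,x'\to x}W_\uparrow(t,x')$ and $W_\uparrow(T,x)\subset\limsup_{t\to T^-,x'\to x}W_\uparrow(t,x')$, where $\limsup$ is the set of limits $y$ of $y_k\in W_\uparrow(t_k,x_k)$ with $(t_k,x_k)\to$ the indicated point; (iii) $W(T,x)=\{0\}$. *)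

From Stdlib Require Import Reals Lra.
From Stdlib Require Fin.
Open Scope R_scope.

Definition Vec (k : nat) : Type := Fin.t k -> R.

Fixpoint vsum (k : nat) : Vec k -> R :=
  match k return Vec k -> R with
  | O => fun _ => 0
  | S k' => fun v => v Fin.F1 + vsum k' (fun i => v (Fin.FS i))
  end.

Definition vdot {k} (u v : Vec k) : R := vsum k (fun i => u i * v i).
Definition vnorm {k} (v : Vec k) : R := sqrt (vdot v v).
Definition vadd {k} (u v : Vec k) : Vec k := fun i => u i + v i.
Definition vsub {k} (u v : Vec k) : Vec k := fun i => u i - v i.
Definition vopp {k} (u : Vec k) : Vec k := fun i => - u i.
Definition vscal {k} (a : R) (u : Vec k) : Vec k := fun i => a * u i.
Definition vzero {k} : Vec k := fun _ => 0.

Definition PV (n p : nat) : Type := (Vec n * Vec p)%type.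
Definition pvdot {n p} (a b : PV n p) : R := vdot (fst a) (fst b) + vdot (snd a) (snd b).
Definition pvnorm {n p} (a : PV n p) : R := sqrt (pvdot a a).
Definition pvsub {n p} (a b : PV n p) : PV n p := (vsub (fst a) (fst b), vsub (snd a) (snd b)).
Definition pvcomb {n p} (l : R) (a b : PV n p) : PV n p :=
  (vadd (vscal l (fst a)) (vscal (1 - l) (fst b)),
   vadd (vscal l (snd a)) (vscal (1 - l) (snd b))).

Definition convex_pv {n p} (C : PV n p -> Prop) : Prop :=
  forall a b l, C a -> C b -> 0 <= l <= 1 -> C (pvcomb l a b).

Definition conv_hull {n p} (S : PV n p -> Prop) : PV n p -> Prop :=
  fun z => forall C, convex_pv C -> (forall s, S s -> C s) -> C z.

Definition closure_pv {n p} (S : PV n p -> Prop) : PV n p -> Prop :=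
  fun z => forall eps, eps > 0 -> exists s, S s /\ pvnorm (pvsub s z) < eps.

Definition FL {n m p} (f : Vec n -> Vec m -> Vec n) (L : Vec n -> Vec m -> Vec p)
  (U : Vec m -> Prop) (x : Vec n) : PV n p -> Prop :=
  closure_pv (conv_hull (fun z => exists u, U u /\ z = (f x u, L x u))).

Definition Z3 (n p : nat) : Type := (R * Vec n * Vec p)%type.
Definition zt {n p} (z : Z3 n p) : R := fst (fst z).
Definition zx {n p} (z : Z3 n p) : Vec n := snd (fst z).
Definition zy {n p} (z : Z3 n p) : Vec p := snd z.
Definition zdot {n p} (a b : Z3 n p) : R :=
  zt a * zt b + vdot (zx a) (zx b) + vdot (zy a) (zy b).
Definition znorm {n p} (a : Z3 n p) : R := sqrt (zdot a a).
Definition zsub {n p} (a b : Z3 n p) : Z3 n p :=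
  (zt a - zt b, vsub (zx a) (zx b), vsub (zy a) (zy b)).
Definition zaddscal {n p} (a : Z3 n p) (h : R) (b : Z3 n p) : Z3 n p :=
  (zt a + h * zt b, vadd (zx a) (vscal h (zx b)), vadd (zy a) (vscal h (zy b))).

Definition contingent_cone {n p} (S : Z3 n p -> Prop) (z : Z3 n p) (v : Z3 n p) : Prop :=
  exists (h : nat -> R) (vk : nat -> Z3 n p),
    (forall k, 0 < h k) /\ Un_cv h 0 /\
    (forall eps, eps > 0 -> exists N, forall k, (k >= N)%nat -> znorm (zsub (vk k) v) < eps) /\
    (forall k, S (zaddscal z (h k) (vk k))).

Definition proximal_normal {n p} (S : Z3 n p -> Prop) (z : Z3 n p) (v : Z3 n p) : Prop :=
  exists M, M > 0 /\ forall zb, S zb -> zdot v (zsub zb z) <= M * (znorm (zsub zb z))^2.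

Definition SVMap (n p : nat) : Type := R -> Vec n -> Vec p -> Prop.

Definition Wup {n p} (P : Vec p -> Prop) (W : SVMap n p) : SVMap n p :=
  fun t x y => exists w q, W t x w /\ P q /\ y = vadd w q.

Definition gph {n p} (T : R) (F : SVMap n p) : Z3 n p -> Prop :=
  fun z => 0 <= zt z <= T /\ F (zt z) (zx z) (zy z).

Definition cont_deriv {n p} (T : R) (F : SVMap n p) (t : R) (x : Vec n) (y : Vec p)
  (a : R) (v : Vec n) (w : Vec p) : Prop :=
  contingent_cone (gph T F) (t, x, y) (a, v, w).

Definition coderiv {n p} (T : R) (F : SVMap n p) (t : R) (x : Vec n) (y : Vec p)
  (w : Vec p) (xi : R) (v : Vec n) : Prop :=
  proximal_normal (gph T F) (t, x, y) (xi, v, vopp w).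

Definition closed_set {k} (S : Vec k -> Prop) : Prop :=
  forall z, (forall eps, eps > 0 -> exists s, S s /\ vnorm (vsub s z) < eps) -> S z.
Definition bounded_set {k} (S : Vec k -> Prop) : Prop :=
  exists B, forall s, S s -> vnorm s <= B.
(* compact subset of R^m (Heine-Borel) *)
Definition compact_set {k} (S : Vec k -> Prop) : Prop := closed_set S /\ bounded_set S.

Definition MOC_regular {n m q} (U : Vec m -> Prop) (g : Vec n -> Vec m -> Vec q) : Prop :=
  (forall x u, U u -> forall eps, eps > 0 -> exists delta, delta > 0 /\
     forall x' u', U u' -> vnorm (vsub x' x) < delta -> vnorm (vsub u' u) < delta ->
       vnorm (vsub (g x' u') (g x u)) < eps) /\
  (exists B, forall x u, U u -> vnorm (g x u) <= B) /\
  (exists K, forall x x' u, U u -> vnorm (vsub (g x u) (g x' u)) <= K * vnorm (vsub x x')).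

Definition ordering_cone {p} (P : Vec p -> Prop) : Prop :=
  closed_set P /\
  (forall a b, P a -> P b -> P (vadd a b)) /\
  (forall l a, 0 <= l -> P a -> P (vscal l a)) /\
  P vzero /\
  (forall a, P a -> P (vopp a) -> a = vzero) /\
  (exists c r, r > 0 /\ forall z, vnorm (vsub z c) < r -> P z).

Definition extremal_map {n p} (T : R) (P : Vec p -> Prop) (W : SVMap n p) : Prop :=
  forall t x y, 0 <= t <= T -> W t x y ->
    (forall z, (W t x z /\ exists q, P q /\ z = vsub y q) <-> z = y) /\
    (forall z, (W t x z /\ exists q, P q /\ z = vadd y q) <-> z = y).

Definition gen_contingent_solution {n m p} (T : R) (U : Vec m -> Prop)
  (f : Vec n -> Vec m -> Vec n) (L : Vec n -> Vec m -> Vec p)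
  (P : Vec p -> Prop) (W : SVMap n p) : Prop :=
  extremal_map T P W /\
  (forall t x y, 0 <= t < T -> W t x y ->
     exists fb Lb, FL f L U x (fb, Lb) /\ cont_deriv T (Wup P W) t x y 1 fb (vopp Lb)) /\
  (forall t x y, 0 < t <= T -> W t x y ->
     forall fv Lv, FL f L U x (fv, Lv) -> cont_deriv T (Wup P W) t x y (-1) (vopp fv) Lv) /\
  (forall x y, W T x y <-> y = vzero).

Definition in_limsup {n p} (F : SVMap n p) (range : R -> Prop) (t0 : R) (x : Vec n) (y : Vec p) : Prop :=
  exists (tk : nat -> R) (xk : nat -> Vec n) (yk : nat -> Vec p),
    (forall k, range (tk k) /\ F (tk k) (xk k) (yk k)) /\
    Un_cv tk t0 /\
    (forall eps, eps > 0 -> exists N, forall k, (k >= N)%nat ->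
        vnorm (vsub (xk k) x) < eps /\ vnorm (vsub (yk k) y) < eps).

Definition gen_proximal_solution {n m p} (T : R) (U : Vec m -> Prop)
  (f : Vec n -> Vec m -> Vec n) (L : Vec n -> Vec m -> Vec p)
  (P : Vec p -> Prop) (W : SVMap n p) : Prop :=
  extremal_map T P W /\
  (forall t x y, 0 < t < T -> W t x y ->
     forall w xi v, coderiv T (Wup P W) t x y w xi v ->
       (* xi + inf_{(f,L) in FL(x)} (<v,f> + <w,L>) = 0, i.e. the infimum equals -xi *)
       (forall fv Lv, FL f L U x (fv, Lv) -> - xi <= vdot v fv + vdot w Lv) /\
       (forall b, (forall fv Lv, FL f L U x (fv, Lv) -> b <= vdot v fv + vdot w Lv) -> b <= - xi)) /\
  (forall x y, Wup P W 0 x y -> in_limsup (Wup P W) (fun t => 0 < t <= T) 0 x y) /\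
  (forall x y, Wup P W T x y -> in_limsup (Wup P W) (fun t => 0 <= t < T) T x y) /\
  (forall x y, W T x y <-> y = vzero).

(* The proof rests on two facts about sets in R x R^n x R^p.
   - A proximal normal nu to S at z is polar to the contingent cone:
     <nu, d> <= 0 for every d in T_S(z)  (proximal_normal_polar).
   - A contingent direction d to the graph of F at (t0,x,y) whose time
     component is nonzero produces graph points (t_k,x_k,y_k) -> (t0,x,y)
     with t_k strictly on the side of t0 given by the sign of that time
     component, so y lies in the corresponding limsup  (contingent_limsup).
   For W_up = W + P, the first fact turns the backward contingent inclusion
   into "-xi <= <v,f> + <w,L> on (FL)(x)" and the forward one into the
   attainment of this bound, i.e. the proximal Hamilton-Jacobi equality; the
   second fact at t = 0 (forward) and t = T (backward), with W_up + P = W_up,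
   gives the limsup boundary conditions. *)

From Stdlib Require Import Reals Lra Lia FunctionalExtensionality.
Open Scope R_scope.

Lemma vsum_ext k (f g : Vec k) : (forall i, f i = g i) -> vsum k f = vsum k g.
Proof.
  induction k as [|k IH]; simpl; intros Hfg; [reflexivity|].
  rewrite Hfg, (IH _ (fun i => g (Fin.FS i))); auto.
Qed.

Lemma vsum_nonneg k (f : Vec k) : (forall i, 0 <= f i) -> 0 <= vsum k f.
Proof.
  induction k as [|k IH]; simpl; intros Hf; [lra|].
  pose proof (Hf Fin.F1). pose proof (IH (fun i => f (Fin.FS i)) (fun i => Hf _)). lra.
Qed.

Lemma vsum_scal k c (f : Vec k) : vsum k (fun i => c * f i) = c * vsum k f.
Proof.
  induction k as [|k IH]; simpl; [ring|].
  rewrite (IH (fun i => f (Fin.FS i))); ring.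
Qed.

Lemma vsum_add k (f g : Vec k) : vsum k (fun i => f i + g i) = vsum k f + vsum k g.
Proof.
  induction k as [|k IH]; simpl; [ring|].
  rewrite (IH (fun i => f (Fin.FS i)) (fun i => g (Fin.FS i))); ring.
Qed.

Lemma vdot_nonneg k (u : Vec k) : 0 <= vdot u u.
Proof. apply vsum_nonneg; intros i; apply Rle_0_sqr. Qed.

Lemma vdot_scal_r k h (u v : Vec k) : vdot u (vscal h v) = h * vdot u v.
Proof. unfold vdot, vscal; rewrite <- vsum_scal; apply vsum_ext; intros; ring. Qed.

Lemma vdot_sub_r k (u v w : Vec k) : vdot u (vsub v w) = vdot u v - vdot u w.
Proof.
  unfold vdot, vsub.
  transitivity (vsum k (fun i => u i * v i + (-1) * (u i * w i))).
  - apply vsum_ext; intros; ring.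
  - rewrite vsum_add, vsum_scal; ring.
Qed.

Lemma vdot_opp_l k (u v : Vec k) : vdot (vopp u) v = - vdot u v.
Proof.
  unfold vdot, vopp; replace (- _) with (-1 * vsum k (fun i => u i * v i)) by ring.
  rewrite <- vsum_scal; apply vsum_ext; intros; ring.
Qed.

Lemma vdot_opp_r k (u v : Vec k) : vdot u (vopp v) = - vdot u v.
Proof.
  unfold vdot, vopp; replace (- _) with (-1 * vsum k (fun i => u i * v i)) by ring.
  rewrite <- vsum_scal; apply vsum_ext; intros; ring.
Qed.

Lemma vdot_scal_self k h (v : Vec k) : vdot (vscal h v) (vscal h v) = h * h * vdot v v.
Proof. unfold vdot, vscal; rewrite <- vsum_scal; apply vsum_ext; intros; ring. Qed.

Lemma vdot_expand k h (u v : Vec k) :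
  vdot (vsub u (vscal h v)) (vsub u (vscal h v))
  = vdot u u - 2 * h * vdot u v + h * h * vdot v v.
Proof.
  unfold vdot, vsub, vscal.
  transitivity (vsum k (fun i => u i * u i + ((-2 * h) * (u i * v i) + (h * h) * (v i * v i)))).
  - apply vsum_ext; intros; ring.
  - rewrite !vsum_add, !vsum_scal; ring.
Qed.

Lemma vdot_sub_self k (a : Vec k) : vdot (vsub a a) (vsub a a) = 0.
Proof.
  unfold vdot, vsub.
  transitivity (vsum k (fun i => 0 * (a i * a i))).
  - apply vsum_ext; intros; ring.
  - rewrite vsum_scal; ring.
Qed.

Lemma vnorm_scal k h (v : Vec k) : vnorm (vscal h v) = Rabs h * vnorm v.
Proof.
  unfold vnorm; rewrite vdot_scal_self, sqrt_mult_alt by apply Rle_0_sqr.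
  rewrite <- sqrt_Rsqr_abs; reflexivity.
Qed.

Lemma vadd_scal_sub k (x v : Vec k) h : vsub (vadd x (vscal h v)) x = vscal h v.
Proof. apply functional_extensionality; intros; unfold vsub, vadd, vscal; ring. Qed.

Lemma vadd_sub_shift k (a b q : Vec k) : vsub (vadd a q) (vadd b q) = vsub a b.
Proof. apply functional_extensionality; intros; unfold vsub, vadd; ring. Qed.

Definition zscal {n p} (h : R) (b : Z3 n p) : Z3 n p :=
  (h * zt b, vscal h (zx b), vscal h (zy b)).

Lemma zscal_1 n p (b : Z3 n p) : zscal 1 b = b.
Proof.
  destruct b as [[t x] y]; unfold zscal, zt, zx, zy, vscal; simpl.
  f_equal; [f_equal; [ring|]|]; apply functional_extensionality; intros; ring.
Qed.

Lemma zsub_zaddscal n p (z b : Z3 n p) h : zsub (zaddscal z h b) z = zscal h b.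
Proof.
  unfold zsub, zaddscal, zscal, zt, zx, zy; simpl.
  rewrite !vadd_scal_sub; f_equal; f_equal; ring.
Qed.

Lemma zdot_nonneg n p (a : Z3 n p) : 0 <= zdot a a.
Proof. unfold zdot; pose proof (vdot_nonneg _ (zx a)); pose proof (vdot_nonneg _ (zy a)); nra. Qed.

Lemma zdot_scal_r n p (a b : Z3 n p) h : zdot a (zscal h b) = h * zdot a b.
Proof. unfold zdot, zscal, zt, zx, zy; simpl; rewrite !vdot_scal_r; ring. Qed.

Lemma zdot_sub_r n p (a b c : Z3 n p) : zdot a (zsub b c) = zdot a b - zdot a c.
Proof. unfold zdot, zsub, zt, zx, zy; simpl; rewrite !vdot_sub_r; ring. Qed.

Lemma zdot_scal_self n p (b : Z3 n p) h : zdot (zscal h b) (zscal h b) = h * h * zdot b b.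
Proof. unfold zdot, zscal, zt, zx, zy; simpl; rewrite !vdot_scal_self; ring. Qed.

Lemma zdot_expand n p (a b : Z3 n p) h :
  zdot (zsub a (zscal h b)) (zsub a (zscal h b))
  = zdot a a - 2 * h * zdot a b + h * h * zdot b b.
Proof. unfold zdot, zsub, zscal, zt, zx, zy; simpl; rewrite !vdot_expand; ring. Qed.

Lemma zdot_coderiv_direction n p xi (v u : Vec n) (w l : Vec p) a :
  zdot ((xi, v, vopp w) : Z3 n p) (a, u, l) = xi * a + vdot v u - vdot w l.
Proof. unfold zdot, zt, zx, zy; simpl; rewrite vdot_opp_l; ring. Qed.

Lemma discriminant_nonpos A B C :
  0 <= A -> 0 <= B -> (forall h, 0 <= A - 2 * h * C + h * h * B) -> C * C <= A * B.
Proof.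
  intros HA HB Hq.
  destruct (Rle_lt_or_eq_dec 0 B HB) as [HBpos|HB0].
  - pose proof (Hq (C / B)) as H.
    replace (A - 2 * (C / B) * C + C / B * (C / B) * B) with ((A * B - C * C) / B) in H
      by (field; lra).
    assert (Hm : 0 <= (A * B - C * C) / B * B) by (apply Rmult_le_pos; lra).
    unfold Rdiv in Hm; rewrite Rmult_assoc, Rinv_l in Hm by lra; lra.
  - subst B. destruct (Req_dec C 0) as [HC|HC]; [subst C; lra|].
    pose proof (Hq ((A + 1) / (2 * C))) as H.
    replace (A - 2 * ((A + 1) / (2 * C)) * C + (A + 1) / (2 * C) * ((A + 1) / (2 * C)) * 0)
      with (-1) in H by (field; auto). lra.
Qed.

Lemma znorm_nonneg n p (a : Z3 n p) : 0 <= znorm a.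
Proof. apply sqrt_pos. Qed.

Lemma znorm_sq n p (a : Z3 n p) : znorm a * znorm a = zdot a a.
Proof. apply sqrt_sqrt, zdot_nonneg. Qed.

Lemma zdot_cauchy_schwarz n p (a b : Z3 n p) : Rabs (zdot a b) <= znorm a * znorm b.
Proof.
  assert (Hcs : zdot a b * zdot a b <= zdot a a * zdot b b).
  { apply discriminant_nonpos; try apply zdot_nonneg.
    intros h; rewrite <- zdot_expand; apply zdot_nonneg. }
  unfold znorm; rewrite <- sqrt_mult by apply zdot_nonneg.
  rewrite <- sqrt_Rsqr_abs; apply sqrt_le_1_alt; exact Hcs.
Qed.

Lemma znorm_reverse_triangle n p (a b : Z3 n p) :
  Rabs (znorm a - znorm b) <= znorm (zsub a b).
Proof.
  rewrite <- (Rabs_pos_eq (znorm (zsub a b))) by apply znorm_nonneg.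
  apply Rsqr_le_abs_0; unfold Rsqr.
  pose proof (zdot_expand _ _ a b 1) as Hexp; rewrite zscal_1 in Hexp.
  rewrite znorm_sq, Hexp.
  pose proof (Rle_abs (zdot a b)); pose proof (zdot_cauchy_schwarz _ _ a b).
  pose proof (znorm_sq _ _ a); pose proof (znorm_sq _ _ b). nra.
Qed.

Lemma Rabs_zt_le n p (a : Z3 n p) : Rabs (zt a) <= znorm a.
Proof.
  rewrite <- sqrt_Rsqr_abs; apply sqrt_le_1_alt; unfold Rsqr, zdot.
  pose proof (vdot_nonneg _ (zx a)); pose proof (vdot_nonneg _ (zy a)); lra.
Qed.

Lemma vnorm_zx_le n p (a : Z3 n p) : vnorm (zx a) <= znorm a.
Proof.
  apply sqrt_le_1_alt; unfold zdot.
  pose proof (Rle_0_sqr (zt a)); pose proof (vdot_nonneg _ (zy a)); unfold Rsqr in *; lra.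
Qed.

Lemma vnorm_zy_le n p (a : Z3 n p) : vnorm (zy a) <= znorm a.
Proof.
  apply sqrt_le_1_alt; unfold zdot.
  pose proof (Rle_0_sqr (zt a)); pose proof (vdot_nonneg _ (zx a)); unfold Rsqr in *; lra.
Qed.

Definition zconv {n p} (vk : nat -> Z3 n p) (v : Z3 n p) : Prop :=
  forall eps, eps > 0 -> exists N, forall k, (k >= N)%nat -> znorm (zsub (vk k) v) < eps.

Lemma cv_const c : Un_cv (fun _ : nat => c) c.
Proof. intros eps He; exists 0%nat; intros; unfold R_dist; rewrite Rminus_diag, Rabs_R0; lra. Qed.

Lemma cv_of_bound (u w : nat -> R) l :
  (forall k, Rabs (u k - l) <= w k) -> Un_cv w 0 -> Un_cv u l.
Proof.
  intros Hb Hw eps He; destruct (Hw eps He) as [N HN]; exists N; intros k Hk.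
  specialize (HN k Hk); unfold R_dist in *; rewrite Rminus_0_r in HN.
  pose proof (Hb k); pose proof (Rle_abs (w k)); lra.
Qed.

Lemma cv_eventually_pos (u : nat -> R) l :
  Un_cv u l -> 0 < l -> exists N, forall k, (k >= N)%nat -> 0 < u k.
Proof.
  intros Hu Hl; destruct (Hu l Hl) as [N HN]; exists N; intros k Hk.
  specialize (HN k Hk); unfold R_dist in HN; apply Rabs_def2 in HN; lra.
Qed.

Section ConvergentSequence.
Variables (n p : nat) (vk : nat -> Z3 n p) (d : Z3 n p).
Hypothesis Hconv : zconv vk d.

Lemma zconv_dist : Un_cv (fun k => znorm (zsub (vk k) d)) 0.
Proof.
  intros eps He; destruct (Hconv eps He) as [N HN]; exists N; intros k Hk.
  unfold R_dist; rewrite Rminus_0_r, Rabs_pos_eq by apply znorm_nonneg; auto.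
Qed.

Lemma zconv_dot (a : Z3 n p) : Un_cv (fun k => zdot a (vk k)) (zdot a d).
Proof.
  apply cv_of_bound with (w := fun k => znorm a * znorm (zsub (vk k) d)).
  - intros k; rewrite <- zdot_sub_r; apply zdot_cauchy_schwarz.
  - rewrite <- (Rmult_0_r (znorm a)); apply CV_mult; [apply cv_const | apply zconv_dist].
Qed.

Lemma zconv_norm : Un_cv (fun k => znorm (vk k)) (znorm d).
Proof.
  apply cv_of_bound with (w := fun k => znorm (zsub (vk k) d));
    [intros; apply znorm_reverse_triangle | apply zconv_dist].
Qed.

Lemma zconv_zt : Un_cv (fun k => zt (vk k)) (zt d).
Proof.
  apply cv_of_bound with (w := fun k => znorm (zsub (vk k) d));
    [intros; apply (Rabs_zt_le _ _ (zsub (vk k) d)) | apply zconv_dist].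
Qed.

End ConvergentSequence.

(* If [nu] is a proximal normal to [S] at [z] and [z + h_k v_k] lies in [S] with
   [h_k -> 0+], [v_k -> d], then [<nu, v_k> <= M h_k |v_k|^2 -> 0], so [<nu, d> <= 0]. *)
Lemma proximal_normal_polar n p (S : Z3 n p -> Prop) (z nu d : Z3 n p) :
  proximal_normal S z nu -> contingent_cone S z d -> zdot nu d <= 0.
Proof.
  intros [M [HM Hprox]] [h [vk [Hh [Hcv [Hvk HS]]]]].
  assert (Hbound : forall k, zdot nu (vk k) <= M * (h k * (znorm (vk k) * znorm (vk k)))).
  { intros k; pose proof (Hprox _ (HS k)) as Hk.
    unfold znorm at 1 in Hk.
    rewrite zsub_zaddscal, zdot_scal_r, pow2_sqrt, zdot_scal_self in Hk by apply zdot_nonneg.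
    rewrite znorm_sq; apply Rmult_le_reg_l with (h k); [apply Hh | nra]. }
  assert (Hlim : Un_cv (fun k => M * (h k * (znorm (vk k) * znorm (vk k))))
                   (M * (0 * (znorm d * znorm d)))).
  { apply CV_mult; [apply cv_const|].
    apply CV_mult; [exact Hcv|]. apply CV_mult; apply zconv_norm; exact Hvk. }
  pose proof (Rle_cv_lim Hbound (zconv_dot _ _ _ _ Hvk nu) Hlim). lra.
Qed.

Lemma zaddscal_coords n p t (x : Vec n) (y : Vec p) h (b : Z3 n p) :
  zaddscal (t, x, y) h b = (t + h * zt b, vadd x (vscal h (zx b)), vadd y (vscal h (zy b))).
Proof. reflexivity. Qed.

Lemma contingent_limsup n p (T : R) (F : SVMap n p) (range : R -> Prop) t0 x y (d : Z3 n p) :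
  zt d <> 0 ->
  (forall tau, 0 <= tau <= T -> zt d * (tau - t0) > 0 -> range tau) ->
  contingent_cone (gph T F) (t0, x, y) d -> in_limsup F range t0 x y.
Proof.
  intros Hd Hrange [h [vk [Hh [Hcv [Hvk HS]]]]].
  assert (Hside : Un_cv (fun k => zt d * zt (vk k)) (zt d * zt d))
    by (apply CV_mult; [apply cv_const | apply zconv_zt; exact Hvk]).
  destruct (cv_eventually_pos _ _ Hside) as [N HN];
    [pose proof (Rsqr_pos_lt _ Hd); unfold Rsqr in *; lra|].
  assert (Hstep : Un_cv (fun k => h k * znorm (vk k)) 0).
  { rewrite <- (Rmult_0_l (znorm d)); apply CV_mult; [exact Hcv | apply zconv_norm; exact Hvk]. }
  exists (fun k => t0 + h (k + N)%nat * zt (vk (k + N)%nat)),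
         (fun k => vadd x (vscal (h (k + N)%nat) (zx (vk (k + N)%nat)))),
         (fun k => vadd y (vscal (h (k + N)%nat) (zy (vk (k + N)%nat)))).
  split; [|split].
  - intros k; destruct (HS (k + N)%nat) as [Ht HF].
    rewrite zaddscal_coords in Ht, HF; unfold zt, zx, zy in Ht, HF; simpl in Ht, HF.
    split; [|exact HF].
    apply Hrange; [exact Ht|].
    pose proof (Hh (k + N)%nat); pose proof (HN (k + N)%nat ltac:(lia)); unfold zt in *; nra.
  - assert (Ht : Un_cv (fun k => t0 + h k * zt (vk k)) (t0 + 0 * zt d))
      by (apply CV_plus; [apply cv_const | apply CV_mult; [exact Hcv | apply zconv_zt; exact Hvk]]).
    rewrite Rmult_0_l, Rplus_0_r in Ht; exact (CV_shift' _ N _ Ht).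
  - intros eps He; destruct (Hstep eps He) as [N1 HN1]; exists N1; intros k Hk.
    specialize (HN1 (k + N)%nat ltac:(lia)); unfold R_dist in HN1.
    pose proof (Hh (k + N)%nat).
    rewrite Rminus_0_r, Rabs_pos_eq in HN1 by (pose proof (znorm_nonneg _ _ (vk (k + N)%nat)); nra).
    rewrite !vadd_scal_sub, !vnorm_scal, Rabs_pos_eq by lra.
    pose proof (vnorm_zx_le _ _ (vk (k + N)%nat)); pose proof (vnorm_zy_le _ _ (vk (k + N)%nat)).
    split; nra.
Qed.

Lemma in_limsup_translate n p (F : SVMap n p) range t0 x y (q : Vec p) :
  (forall t x' y', F t x' y' -> F t x' (vadd y' q)) ->
  in_limsup F range t0 x y -> in_limsup F range t0 x (vadd y q).
Proof.
  intros Hinv [tk [xk [yk [Hk [Ht Hxy]]]]].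
  exists tk, xk, (fun k => vadd (yk k) q); split; [|split; [exact Ht|]].
  - intros k; destruct (Hk k); split; auto.
  - intros eps He; destruct (Hxy eps He) as [N HN]; exists N; intros k Hk'.
    rewrite vadd_sub_shift; auto.
Qed.

Lemma Wup_add_cone n p (P : Vec p -> Prop) (W : SVMap n p) t x y q :
  (forall a b, P a -> P b -> P (vadd a b)) ->
  Wup P W t x y -> P q -> Wup P W t x (vadd y q).
Proof.
  intros Hadd [w [q' [HW [Hq' ->]]]] Hq; exists w, (vadd q' q); split; [exact HW|].
  split; [apply Hadd; auto|].
  apply functional_extensionality; intros; unfold vadd; ring.
Qed.

Lemma conv_hull_incl n p (S : PV n p -> Prop) z : S z -> conv_hull S z.
Proof. intros Hz C _ HS; apply HS, Hz. Qed.

Lemma closure_incl n p (S : PV n p -> Prop) z : S z -> closure_pv S z.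
Proof.
  intros Hz eps He; exists z; split; [exact Hz|].
  unfold pvnorm, pvdot, pvsub; simpl; rewrite !vdot_sub_self, Rplus_0_r, sqrt_0; lra.
Qed.

Lemma FL_generator n m p (f : Vec n -> Vec m -> Vec n) (L : Vec n -> Vec m -> Vec p) U x u :
  U u -> FL f L U x (f x u, L x u).
Proof. intros Hu; apply closure_incl, conv_hull_incl; exists u; auto. Qed.

Theorem proposition8p2 (T : R) (n m p : nat)
  (U : Vec m -> Prop) (f : Vec n -> Vec m -> Vec n) (L : Vec n -> Vec m -> Vec p)
  (P : Vec p -> Prop) (W : SVMap n p) :
  T > 0 -> (1 <= n)%nat -> (1 <= m)%nat -> (1 <= p)%nat ->
  (exists u, U u) -> compact_set U ->
  MOC_regular U f -> MOC_regular U L ->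
  ordering_cone P ->
  gen_contingent_solution T U f L P W ->
  gen_proximal_solution T U f L P W.
Proof.
  intros HT _ _ _ [u0 Hu0] _ _ _ [_ [Hadd _]] [Hext [Hforward [Hbackward HTzero]]].
  split; [exact Hext|]; split; [|split; [|split]].
  - (* the Hamilton-Jacobi equality: backward directions give [-xi <= <v,f> + <w,L>]
       on all of (FL)(x), the forward direction attains it *)
    intros t x y Ht Hy w xi v Hnormal; split.
    + intros fv Lv HFL.
      pose proof (proximal_normal_polar _ _ _ _ _ _ Hnormal
                    (Hbackward t x y ltac:(lra) Hy fv Lv HFL)) as Hpolar.
      rewrite zdot_coderiv_direction, vdot_opp_r in Hpolar; lra.
    + intros b Hb; destruct (Hforward t x y ltac:(lra) Hy) as [fb [Lb [HFL Hdir]]].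
      pose proof (proximal_normal_polar _ _ _ _ _ _ Hnormal Hdir) as Hpolar.
      rewrite zdot_coderiv_direction, vdot_opp_r in Hpolar; specialize (Hb fb Lb HFL); lra.
  -
    intros x y [w [q [HW [Hq ->]]]].
    destruct (Hforward 0 x w ltac:(lra) HW) as [fb [Lb [_ Hdir]]].
    apply in_limsup_translate; [intros; apply Wup_add_cone; auto|].
    apply (contingent_limsup _ _ T _ _ 0 x w (1, fb, vopp Lb)); [unfold zt; simpl; lra| |exact Hdir].
    unfold zt; simpl; intros tau Htau Hpos; lra.
  -
    intros x y [w [q [HW [Hq ->]]]].
    pose proof (Hbackward T x w ltac:(lra) HW _ _ (FL_generator _ _ _ f L U x u0 Hu0)) as Hdir.
    apply in_limsup_translate; [intros; apply Wup_add_cone; auto|].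
    apply (contingent_limsup _ _ T _ _ T x w (-1, vopp (f x u0), L x u0));
      [unfold zt; simpl; lra| |exact Hdir].
    unfold zt; simpl; intros tau Htau Hpos; lra.
  - exact HTzero.
Qed.
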